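(* Let $X$ be a linearly ordered set and let $\mathrm{PoisDer}\langle X,d\rangle\cong\mathrm{Pois}\langle d^\omega X\rangle$ be the free differential Poisson algebra. Let $a=x_1x_2\cdots x_t\,[U]$, where $x_1,\dots,x_t\in X$ ($t\ge0$), $U$ is a Lyndon–Shirshov word in the alphabet $d^\omega X$, $[U]$ is its canonical bracketing (a Lie monomial with respect to $\{\cdot,\cdot\}$), and the total number $D([U])$ of applications of $d$ occurring in $U$ equals $t$. Then $a$ belongs to the subalgebra of $\mathrm{PoisDer}\langle X,d\rangle$ generated by $X$ with respect to the operations $[u,v]=\{u,v\}$ and $u\circ v=u\,d(v)$; equivalently, $a$ lies in the image of the GD-algebra homomorphism $\phi\colon\mathrm{GD}\langle X\rangle\to\mathrm{PoisDer}\langle X,d\rangle$ with $\phi(x)=x$, $\phi([u,v])=\{\phi(u),\phi(v)\}$, $\phi(u\circ v)=\phi(u)d(\phi(v))$.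
   Context: A Poisson algebra has an associative commutative product and a Lie bracket $\{\cdot,\cdot\}$ satisfying $\{x,yz\}=\{x,y\}z+y\{x,z\}$; $\mathrm{PoisDer}\langle X,d\rangle$ is the free Poisson algebra generated by $X$ with one derivation $d$ (derivation for both operations), isomorphic to the free Poisson algebra on $d^\omega X=\{d^n(x)\mid n\ge0,x\in X\}$. The letters $d^n(x)$ are ordered lexicographically as pairs $(n,x)$. An associative word $U$ over a linearly ordered alphabet is a Lyndon–Shirshov word if $U>U_2U_1$ lexicographically for every factorization $U=U_1U_2$ into nonempty words; each such word has a canonical bracketing $[U]$, and these form a basis of the free Lie algebra. A GD-algebra is a system $(A,\circ,[\cdot,\cdot])$ with $(A,\circ)$ Novikov ($(a\circ b)\circ c-a\circ(b\circ c)=(b\circ a)\circ c-b\circ(a\circ c)$, $(a\circ b)\circ c=(a\circ c)\circ b$), $(A,[\cdot,\cdot])$ Lie, and $[a,b\circ c]-[c,b\circ a]+[b,a]\circ c-[b,c]\circ a-b\circ[a,c]=0$; $\mathrm{GD}\langle X\rangle$ is the free GD-algebra. *)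

From HB Require Import structures.
From mathcomp Require Import all_boot all_order all_algebra.
Set Implicit Arguments. Unset Strict Implicit. Unset Printing Implicit Defensive.
Import Order.TTheory GRing.Theory.
Local Open Scope ring_scope.

Section Defs.
Variable K : fieldType.

Definition is_poisson_bracket (A : comAlgType K) (br : A -> A -> A) : Prop :=
  [/\ (forall (c : K) u v w, br (c *: u + v) w = c *: br u w + br v w),
      (forall u v, br u v = - br v u),
      (forall u v w, br u (br v w) + br v (br w u) + br w (br u v) = 0)
    & (forall u v w, br u (v * w) = br u v * w + v * br u w)].

Definition is_poisson_der (A : comAlgType K) (br : A -> A -> A) (d : A -> A) : Prop :=
  [/\ (forall (c : K) u v, d (c *: u + v) = c *: d u + d v),
      (forall u v, d (u * v) = d u * v + u * d v)
    & (forall u v, d (br u v) = br (d u) v + br u (d v))].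

Definition is_dpois_hom (A B : comAlgType K) (brA : A -> A -> A) (dA : A -> A)
    (brB : B -> B -> B) (dB : B -> B) (h : A -> B) : Prop :=
  [/\ (forall (c : K) u v, h (c *: u + v) = c *: h u + h v),
      h 1 = 1,
      (forall u v, h (u * v) = h u * h v),
      (forall u v, h (brA u v) = brB (h u) (h v))
    & (forall u, h (dA u) = dB (h u))].

Definition is_free_dpois (X : Type) (A : comAlgType K) (br : A -> A -> A)
    (d : A -> A) (f : X -> A) : Prop :=
  is_poisson_bracket br /\ is_poisson_der br d /\
  forall (B : comAlgType K) (brB : B -> B -> B) (dB : B -> B) (g : X -> B),
    is_poisson_bracket brB -> is_poisson_der brB dB ->
    exists h : A -> B, is_dpois_hom br d brB dB h /\ (forall x, h (f x) = g x) /\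
      forall h' : A -> B, is_dpois_hom br d brB dB h' -> (forall x, h' (f x) = g x) ->
        forall u, h' u = h u.

Inductive GD_gen (X : Type) (A : comAlgType K) (br : A -> A -> A) (d : A -> A)
    (f : X -> A) : A -> Prop :=
  | GDg_gen x : GD_gen br d f (f x)
  | GDg_zero : GD_gen br d f 0
  | GDg_add u v : GD_gen br d f u -> GD_gen br d f v -> GD_gen br d f (u + v)
  | GDg_scale (c : K) u : GD_gen br d f u -> GD_gen br d f (c *: u)
  | GDg_br u v : GD_gen br d f u -> GD_gen br d f v -> GD_gen br d f (br u v)
  | GDg_circ u v : GD_gen br d f u -> GD_gen br d f v -> GD_gen br d f (u * d v).
End Defs.

(* Letters d^n(x) of d^omega X, encoded as pairs (n, x), ordered
   lexicographically. *)
Section Words.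
Context {disp : Order.disp_t} {X : orderType disp}.

Definition letter_lt (a b : nat * X) : bool :=
  (a.1 < b.1)%N || ((a.1 == b.1) && (Order.lt a.2 b.2)).

Fixpoint word_lt (u v : seq (nat * X)) : bool :=
  match u, v with
  | [::], [::] => false
  | [::], _ :: _ => true
  | _ :: _, [::] => false
  | a :: u', b :: v' => letter_lt a b || ((a == b) && word_lt u' v')
  end.

(* Lyndon-Shirshov word: U nonempty and U > U2 U1 for every factorization
   U = U1 U2 with U1, U2 nonempty. *)
Definition is_LS (U : seq (nat * X)) : bool :=
  (0 < size U)%N && all (fun i => word_lt (rot i U) U) (iota 1 (size U).-1).

(* Canonical bracketing: [a] = a for a letter; otherwise U = U1 U2 with U2
   the longest proper suffix of U which is a Lyndon-Shirshov word, and
   [U] = {[U1],[U2]}. *)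
Fixpoint LS_bracket_fuel (T : Type) (br : T -> T -> T) (ev : nat * X -> T) (t0 : T)
    (n : nat) (U : seq (nat * X)) : T :=
  match n with
  | 0 => t0
  | n'.+1 =>
    match U with
    | [::] => t0
    | [:: a] => ev a
    | _ =>
      let i := (find (fun j => is_LS (drop j U)) (iota 1 (size U).-1)).+1 in
      br (LS_bracket_fuel br ev t0 n' (take i U)) (LS_bracket_fuel br ev t0 n' (drop i U))
    end
  end.

Definition LS_bracket (T : Type) (br : T -> T -> T) (ev : nat * X -> T) (t0 : T)
    (U : seq (nat * X)) : T :=
  LS_bracket_fuel br ev t0 (size U) U.

Definition Ddeg (U : seq (nat * X)) : nat := sumn (map fst U).
End Words.

From HB Require Import structures.
From mathcomp Require Import all_boot all_order all_algebra.
From mathcomp Require Import ring.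
Import Order.TTheory GRing.Theory.
Local Open Scope ring_scope.

(* Let S be the subspace generated by X under the GD
   operations [u,v] = {u,v} and u o v = u d(v).  Say that an element a
   "absorbs n factors" if s_1 ... s_n a lies in S for all s_1, ..., s_n in S.
   The theorem says that [U] absorbs D(U) factors (take s_i = x_i).  This
   is proved by induction on the canonical bracketing, from three closure
   properties of absorption which only use that S is a subspace closed
   under the two GD operations and the Leibniz rules:
   - a generator absorbs 0 factors;
   - if a absorbs n factors then d(a) absorbs n + 1 (via s_0 o (s_1...s_n a));
   - if a, b absorb n, m factors then {a,b} absorbs n + m.
   The two last facts rest on a common lemma expanding delta(s_1...s_n) for a
   derivation delta (either d or a bracket {-, s}) by the Leibniz rule. *)

Lemma der1 {A : pzRingType} {delta : A -> A} :
  (forall u v, delta (u * v) = delta u * v + u * delta v) -> delta 1 = 0.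
Proof.
move=> delta_mul; have := delta_mul 1 1; rewrite !(mulr1, mul1r) => delta1.
by apply: (@addrI _ (delta 1)); rewrite addr0 -delta1.
Qed.

Section Absorption.
Context {A : comPzRingType} (S : A -> Prop).
Hypothesis S0 : S 0.
Hypothesis SD : forall u v, S u -> S v -> S (u + v).
Hypothesis SN : forall u, S u -> S (- u).

Lemma SB {u v} : S u -> S v -> S (u - v).
Proof. by move=> Su Sv; apply: SD => //; apply: SN. Qed.

Definition absorbs (n : nat) (a : A) : Prop :=
  forall ss : seq A, size ss = n -> {in ss, forall s, S s} ->
    S ((\prod_(s <- ss) s) * a).

Lemma absorbs0 n : absorbs n 0.
Proof. by move=> ss _ _; rewrite mulr0. Qed.

Lemma absorbs_mull {n s a} : S s -> absorbs n.+1 a -> absorbs n (s * a).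
Proof.
move=> Ss Ha ss size_ss Sss; rewrite mulrCA mulrA.
have := Ha (s :: ss); rewrite big_cons /= size_ss; apply=> // x.
by rewrite in_cons => /predU1P [-> //|]; apply: Sss.
Qed.

(* Leibniz expansion of [c * delta (s_1 ... s_n) * a]: each term replaces
   one factor s_i by [c * delta s_i], so stays in [S] when [a] absorbs
   n factors and [c * delta] maps [S] into itself. *)
Lemma absorbs_der_prod (c : A) (delta : A -> A) :
    (forall u v, delta (u * v) = delta u * v + u * delta v) ->
    (forall s, S s -> S (c * delta s)) ->
  forall ss a, {in ss, forall s, S s} -> absorbs (size ss) a ->
    S (c * delta (\prod_(s <- ss) s) * a).
Proof.
move=> delta_mul Sdelta; elim=> [|s1 ss IH] a Sss Ha.
  by rewrite big_nil (der1 delta_mul) mulr0 mul0r.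
have Ss1 : S s1 by apply: Sss; rewrite mem_head.
have Sss' : {in ss, forall s, S s}.
  by move=> s s_ss; apply: Sss; rewrite in_cons s_ss orbT.
rewrite big_cons delta_mul mulrDr mulrDl; apply: SD.
  have := Ha (c * delta s1 :: ss); rewrite big_cons mulrA; apply=> // x.
  by rewrite in_cons => /predU1P [->|]; [apply: Sdelta | apply: Sss'].
have -> : c * (s1 * delta (\prod_(s <- ss) s)) * a =
          c * delta (\prod_(s <- ss) s) * (s1 * a) by ring.
exact: IH Sss' (absorbs_mull Ss1 Ha).
Qed.

Variables (br : A -> A -> A) (d : A -> A).
Hypothesis Sbr : forall u v, S u -> S v -> S (br u v).
Hypothesis Scirc : forall u v, S u -> S v -> S (u * d v).
Hypothesis br_anti : forall u v, br u v = - br v u.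
Hypothesis br_mulr : forall u v w, br u (v * w) = br u v * w + v * br u w.
Hypothesis d_mul : forall u v, d (u * v) = d u * v + u * d v.

(* By antisymmetry the bracket is a derivation in its left argument too. *)
Lemma br_mull u v w : br (u * v) w = br u w * v + u * br v w.
Proof. by rewrite br_anti br_mulr (br_anti w u) (br_anti w v); ring. Qed.

(* s_0 s_1 ... s_n d(a) = s_0 o (s_1 ... s_n a) - s_0 d(s_1 ... s_n) a. *)
Lemma absorbs_d {n a} : absorbs n a -> absorbs n.+1 (d a).
Proof.
move=> Ha [|s0 ss] //= [size_ss] Sss; rewrite big_cons.
have Ss0 : S s0 by apply: Sss; rewrite mem_head.
have Sss' : {in ss, forall s, S s}.
  by move=> s s_ss; apply: Sss; rewrite in_cons s_ss orbT.
have Scirc_a : S (s0 * d (\prod_(s <- ss) s * a)) by apply/Scirc/Ha.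
have Sdprod : S (s0 * d (\prod_(s <- ss) s) * a).
  by apply: absorbs_der_prod => // [s|]; [apply: Scirc | rewrite size_ss].
have -> : s0 * \prod_(s <- ss) s * d a =
          s0 * d (\prod_(s <- ss) s * a) - s0 * d (\prod_(s <- ss) s) * a.
  by rewrite d_mul; ring.
exact: SB.
Qed.

(* Bracketing with an element of [S]:
   P {a,s} = {P a, s} - {P, s} a for a product P of n elements of [S]. *)
Lemma absorbs_br_elt {n a s} : S s -> absorbs n a -> absorbs n (br a s).
Proof.
move=> Ss Ha ss size_ss Sss.
have Sbr_a : S (br (\prod_(x <- ss) x * a) s) by apply/Sbr/Ss/Ha.
have Sbr_prod : S (1 * br (\prod_(x <- ss) x) s * a).
  apply: (@absorbs_der_prod 1 (br^~ s)) => // [u v|x Sx|].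
  - exact: br_mull.
  - by rewrite mul1r; apply: Sbr.
  - by rewrite size_ss.
have -> : \prod_(x <- ss) x * br a s =
          br (\prod_(x <- ss) x * a) s - 1 * br (\prod_(x <- ss) x) s * a.
  by rewrite br_mull; ring.
exact: SB.
Qed.

(* With P, Q products of n, m elements of [S]:
   P Q {a,b} = {P a, Q b} + P {Q, a} b - {P, Q b} a. *)
Lemma absorbs_br {n m a b} : absorbs n a -> absorbs m b -> absorbs (n + m) (br a b).
Proof.
move=> Ha Hb ss size_ss Sss.
rewrite -(cat_take_drop n ss) big_cat /=.
set P := \prod_(s <- take n ss) s; set Q := \prod_(s <- drop n ss) s.
have size_take : size (take n ss) = n by rewrite size_takel // size_ss leq_addr.
have size_drop : size (drop n ss) = m by rewrite size_drop size_ss addKn.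
have Stake : {in take n ss, forall s, S s} by move=> s /mem_take; apply: Sss.
have Sdrop : {in drop n ss, forall s, S s} by move=> s /mem_drop; apply: Sss.
have Sbr_PaQb : S (br (P * a) (Q * b)) by apply: Sbr; [apply: Ha | apply: Hb].
have SP_Qa_b : S (P * br Q a * b).
  apply: (@absorbs_der_prod P (br^~ a)) => // [u v|x Sx|].
  - exact: br_mull.
  - by rewrite br_anti mulrN; apply/SN/(absorbs_br_elt Sx Ha).
  - by rewrite size_drop.
have S_PQb_a : S (1 * br P (Q * b) * a).
  apply: (@absorbs_der_prod 1 (br^~ (Q * b))) => // [u v|x Sx|].
  - exact: br_mull.
  - by rewrite mul1r; apply: Sbr => //; apply: Hb.
  - by rewrite size_take.
have -> : P * Q * br a b =
          br (P * a) (Q * b) + P * br Q a * b - 1 * br P (Q * b) * a.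
  by rewrite br_mull (br_mulr a) (br_anti a Q); ring.
exact/SB/S_PQb_a/SD.
Qed.

Lemma absorbs_bracket {disp : Order.disp_t} {X : orderType disp}
    (ev : nat * X -> A) :
    (forall l, absorbs l.1 (ev l)) ->
  forall fuel (V : seq (nat * X)), absorbs (Ddeg V) (LS_bracket_fuel br ev 0 fuel V).
Proof.
move=> Hev; elim=> [|fuel IH] [|l [|l' V]]; try exact: absorbs0.
  by rewrite /Ddeg /= addn0.
set W := l :: l' :: V.
set i := (find (fun j => is_LS (drop j W)) (iota 1 (size W).-1)).+1.
have -> : LS_bracket_fuel br ev 0 fuel.+1 W =
          br (LS_bracket_fuel br ev 0 fuel (take i W))
             (LS_bracket_fuel br ev 0 fuel (drop i W)) by [].
have -> : Ddeg W = (Ddeg (take i W) + Ddeg (drop i W))%N.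
  by rewrite /Ddeg -sumn_cat -map_cat cat_take_drop.
exact: absorbs_br.
Qed.

End Absorption.

Theorem mainTheorem15 (K : fieldType) (charK0 : [pchar K] =i pred0)
    (disp : Order.disp_t) (X : orderType disp)
    (A : comAlgType K) (br : A -> A -> A) (d : A -> A) (f : X -> A)
    (hfree : is_free_dpois br d f)
    (xs : seq X) (U : seq (nat * X))
    (hU : is_LS U) (hD : Ddeg U = size xs) :
  GD_gen br d f
    ((\prod_(x <- xs) f x) * LS_bracket br (fun a => iter a.1 d (f a.2)) 0 U).
Proof.
have [[_ br_anti _ br_mulr] [[_ d_mul _] _]] := hfree.
pose S := GD_gen br d f.
have S0 : S 0 by apply: GDg_zero.
have SD : forall u v, S u -> S v -> S (u + v) by move=> *; apply: GDg_add.
have SN : forall u, S u -> S (- u) by move=> u Su; rewrite -scaleN1r; apply: GDg_scale.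
have Sbr : forall u v, S u -> S v -> S (br u v) by move=> *; apply: GDg_br.
have Scirc : forall u v, S u -> S v -> S (u * d v) by move=> *; apply: GDg_circ.
have Hletter : forall l : nat * X, absorbs S l.1 (iter l.1 d (f l.2)).
  case=> k x /=; elim: k => [|k IH]; last exact: (absorbs_d S S0 SD SN d Scirc d_mul IH).
  by move=> [|//] _ _; rewrite big_nil mul1r; apply: GDg_gen.
have := absorbs_bracket S S0 SD SN br Sbr br_anti br_mulr _ Hletter (size U) U.
rewrite hD -(big_map f predT id); apply; first by rewrite size_map.
by move=> s /mapP [x _ ->]; apply: GDg_gen.
Qed.
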